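(* In the multivariate LISO setting with $\sum_iY_i=0$ and, for each $k$, distinct values $X^{(k)}_1,\dots,X^{(k)}_n$, let $\pi^{(k)}$ be the permutation with $X^{(k)}_{\pi^{(k)}(1)}<\dots<X^{(k)}_{\pi^{(k)}(n)}$. If $$\lambda\ge\max_{1\le k\le p,\ 1\le m\le n}\Big|\sum_{i=1}^m Y_{\pi^{(k)}(i)}\Big|,$$ then the zero fit $(\theta_1,\dots,\theta_p)=(0,\dots,0)$ is a minimiser of $L_\lambda$, and every single-covariate update of the LISO-backfitting procedure started at zero leaves the fit at zero.
   Context: Data $Y\in\mathbb{R}^n$ with $\sum_iY_i=0$, $X\in\mathbb{R}^{n\times p}$ with columns $X^{(k)}$. $\mathcal{F}_k$ is the set of $\theta_k\in\mathbb{R}^n$ with $\sum_i\theta_{k,i}=0$ and $\theta_{k,i}\le\theta_{k,j}$ whenever $X^{(k)}_i<X^{(k)}_j$. The LISO loss is $L_\lambda(\theta_1,\dots,\theta_p)=\tfrac12\|Y-\sum_k\theta_k\|^2+\lambda\sum_k(\max_i\theta_{k,i}-\min_i\theta_{k,i})$ over $\mathcal{F}_1\times\dots\times\mathcal{F}_p$. A single-covariate backfitting update replaces $\theta_k$ by the minimiser of $L_\lambda$ over $\theta_k\in\mathcal{F}_k$ with the other components fixed. *)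

(* R is an arbitrary real field (statement is purely order-algebraic). *)
From HB Require Import structures.
From mathcomp Require Import all_boot all_order all_algebra all_fingroup.
Set Implicit Arguments. Unset Strict Implicit. Unset Printing Implicit Defensive.
Import Order.TTheory GRing.Theory Num.Theory.
Local Open Scope ring_scope.

Section LISO.
Variable R : realFieldType.

(* max_i v_i and min_i v_i over 'I_n; the seed of the fold is v's first entry
   (or 0 when n = 0, where the vector is empty), so for n >= 1 these are
   literally the maximum / minimum of the entries. *)
Definition vfirst n (v : 'I_n -> R) : R := nth 0 [seq v i | i <- enum 'I_n] 0.
Definition vmax n (v : 'I_n -> R) : R := \big[Num.max/vfirst v]_(i < n) v i.
Definition vmin n (v : 'I_n -> R) : R := \big[Num.min/vfirst v]_(i < n) v i.

Definition inFk n (Xk : 'I_n -> R) (t : 'I_n -> R) : Prop :=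
  \sum_(i < n) t i = 0 /\ forall i j : 'I_n, Xk i < Xk j -> t i <= t j.

Definition inF n p (X : 'I_p -> 'I_n -> R) (th : 'I_p -> 'I_n -> R) : Prop :=
  forall k : 'I_p, inFk (X k) (th k).

Definition liso_loss n p (lam : R) (Y : 'I_n -> R) (th : 'I_p -> 'I_n -> R) : R :=
  2^-1 * \sum_(i < n) (Y i - \sum_(k < p) th k i) ^+ 2
  + lam * \sum_(k < p) (vmax (th k) - vmin (th k)).

Definition zero_fit n p : 'I_p -> 'I_n -> R := fun _ _ => 0.

Definition upd n p (th : 'I_p -> 'I_n -> R) (k : 'I_p) (t : 'I_n -> R) :
  'I_p -> 'I_n -> R := fun j => if j == k then t else th j.

End LISO.

From HB Require Import structures.
From mathcomp Require Import all_boot all_order all_algebra all_fingroup.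
From mathcomp Require Import ring.
From Stdlib Require Import FunctionalExtensionality.
Set Implicit Arguments. Unset Strict Implicit. Unset Printing Implicit Defensive.
Import Order.TTheory GRing.Theory Num.Theory.
Local Open Scope ring_scope.

(* Expanding the square, L(theta) = L(0) + |sum_k theta_k|^2 / 2
   + (lambda * sum_k range(theta_k) - <Y, sum_k theta_k>).  For a monotone
   theta_k, Abel summation along the order of X^(k) writes <Y, theta_k> as a
   combination of the partial sums of Y (the total sum vanishes) against the
   nonnegative increments of theta_k, so it is at most lambda * range(theta_k).
   Hence L(theta) >= L(0) + |sum_k theta_k|^2 / 2: zero is a minimiser, and any
   minimiser has zero total fit, which for a single-covariate update means the
   updated component is zero. *)

Section LisoZero.
Variable R : realFieldType.

Lemma vmax_ge n (v : 'I_n -> R) i : v i <= vmax v.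
Proof. exact: le_bigmax. Qed.

Lemma vmin_le n (v : 'I_n -> R) i : vmin v <= v i.
Proof. exact: bigmin_le. Qed.

Lemma vfirst0 n : vfirst (fun _ : 'I_n => 0 : R) = 0.
Proof. by rewrite /vfirst; case: (enum 'I_n). Qed.

Lemma vmax0 n : vmax (fun _ : 'I_n => 0 : R) = 0.
Proof. by rewrite /vmax vfirst0 bigmax_eq_id. Qed.

Lemma vmin0 n : vmin (fun _ : 'I_n => 0 : R) = 0.
Proof. by rewrite /vmin vfirst0 bigmin_eq_id. Qed.

Lemma abel_sum_le (y u : nat -> R) (lam : R) N :
  (forall m, (1 <= m <= N)%N -> `|\sum_(i < m) y i| <= lam) ->
  (forall m, (m < N)%N -> u m <= u m.+1) ->
  \sum_(i < N.+1) y i * u i - (\sum_(i < N.+1) y i) * u N <= lam * (u N - u 0%N).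
Proof.
elim: N => [|N IH] hy hu; first by rewrite !big_ord1 !subrr mulr0.
rewrite big_ord_recr /= [X in _ - X * _]big_ord_recr /=.
set a := \sum_(i < N.+1) y i * u i; set c := \sum_(i < N.+1) y i.
have -> : a + y N.+1 * u N.+1 - (c + y N.+1) * u N.+1
          = (a - c * u N) + - (c * (u N.+1 - u N)) by ring.
have IHN : a - c * u N <= lam * (u N - u 0%N).
  apply: IH => [m /andP[m1 mN]|m mN]; last by rewrite hu // ltnW.
  by rewrite hy // m1 ltnW.
have step : - (c * (u N.+1 - u N)) <= lam * (u N.+1 - u N).
  rewrite -mulNr ler_wpM2r ?subr_ge0 ?hu //.
  by apply: ler_normlW; rewrite normrN hy // leqnn.
by apply: le_trans (lerD IHN step) _; rewrite -mulrDr addrC addrA subrK.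
Qed.

Lemma inner_inFk_le_range n (Y Xk t : 'I_n -> R) (lam : R) (s : 'S_n) :
  \sum_(i < n) Y i = 0 ->
  (forall i j : 'I_n, (i < j)%N -> Xk (s i) < Xk (s j)) ->
  (forall m : nat, (1 <= m <= n)%N ->
     `| \sum_(i < n | (i < m)%N) Y (s i) | <= lam) ->
  inFk Xk t ->
  \sum_(i < n) Y i * t i <= lam * (vmax t - vmin t).
Proof.
case: n Y Xk t s => [|n] Y Xk t s hY hs hlam [_ ht].
  by rewrite /vmax /vmin !big_ord0 subrr mulr0.
have lam_ge0 : 0 <= lam by apply: le_trans (normr_ge0 _) (hlam 1%N _).
pose y j := Y (s (inord j)); pose u j := t (s (inord j)).
have sum_perm (F : 'I_n.+1 -> R) : \sum_i F i = \sum_(i < n.+1) F (s (inord i)).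
  by rewrite (reindex_inj (@perm_inj _ s)); apply: eq_bigr => i _; rewrite inord_val.
have hy m : (1 <= m <= n)%N -> `|\sum_(i < m) y i| <= lam.
  move=> /andP[m1 mn]; rewrite (big_ord_widen n.+1 y (leqW mn)).
  under eq_bigr => i _ do rewrite /y inord_val.
  by rewrite hlam // m1 leqW.
have hu m : (m < n)%N -> u m <= u m.+1.
  by move=> mn; apply/ht/hs; rewrite !inordK // ltnS // ltnW.
have := @abel_sum_le y u lam n hy hu.
rewrite -sum_perm -(sum_perm (fun i => Y i * t i)) hY mul0r subr0 => /le_trans.
by apply; rewrite ler_wpM2l // lerB ?vmax_ge ?vmin_le.
Qed.

Lemma liso_loss_zero_fit n p (lam : R) (Y : 'I_n -> R) :
  liso_loss lam Y (@zero_fit R n p) = 2^-1 * \sum_(i < n) Y i ^+ 2.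
Proof.
rewrite /liso_loss [X in lam * X]big1 => [|k _]; last by rewrite /zero_fit vmax0 vmin0 subrr.
by rewrite mulr0 addr0; congr (_ * _); apply: eq_bigr => i _; rewrite big1 ?subr0.
Qed.

Lemma liso_lossE n p (lam : R) (Y : 'I_n -> R) (th : 'I_p -> 'I_n -> R) :
  liso_loss lam Y th = liso_loss lam Y (@zero_fit R n p)
    + 2^-1 * \sum_(i < n) (\sum_(k < p) th k i) ^+ 2
    + (lam * \sum_(k < p) (vmax (th k) - vmin (th k))
       - \sum_(k < p) \sum_(i < n) Y i * th k i).
Proof.
rewrite liso_loss_zero_fit /liso_loss.
have -> : \sum_(k < p) \sum_(i < n) Y i * th k i
          = \sum_(i < n) Y i * \sum_(k < p) th k i.
  by rewrite exchange_big; apply: eq_bigr => i _; rewrite mulr_sumr.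
have -> : \sum_(i < n) (Y i - \sum_(k < p) th k i) ^+ 2
          = \sum_(i < n) Y i ^+ 2 + \sum_(i < n) (\sum_(k < p) th k i) ^+ 2
            - (\sum_(i < n) Y i * \sum_(k < p) th k i) *+ 2.
  rewrite -sumrMnl -big_split -sumrB; apply: eq_bigr => i _.
  by rewrite sqrrB addrAC.
by field.
Qed.

Lemma inFk0 n (Xk : 'I_n -> R) : inFk Xk (fun _ => 0).
Proof. by split=> [|*]; rewrite ?big1. Qed.

Lemma inF_upd_zero_fit n p (X : 'I_p -> 'I_n -> R) k t :
  inFk (X k) t -> inF X (upd (@zero_fit R n p) k t).
Proof. by move=> ht j; rewrite /upd; case: eqP => [-> //|_]; apply: inFk0. Qed.

Lemma upd_zero_fit0 n p (k : 'I_p) :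
  upd (@zero_fit R n p) k (fun _ => 0) = @zero_fit R n p.
Proof. by apply: functional_extensionality => j; rewrite /upd; case: eqP. Qed.

Lemma sum_upd_zero_fit n p (k : 'I_p) (t : 'I_n -> R) i :
  \sum_(j < p) upd (@zero_fit R n p) k t j i = t i.
Proof.
by rewrite (bigD1 k) //= /upd eqxx big1 ?addr0 // => j /negbTE ->.
Qed.

Variables (n p : nat) (Y : 'I_n -> R) (X : 'I_p -> 'I_n -> R) (lam : R).
Variable pi : 'I_p -> 'S_n.
Hypothesis hY : \sum_(i < n) Y i = 0.
Hypothesis hpi : forall (k : 'I_p) (i j : 'I_n),
  (i < j)%N -> X k (pi k i) < X k (pi k j).
Hypothesis hlam : forall (k : 'I_p) (m : nat), (1 <= m <= n)%N ->
  `| \sum_(i < n | (i < m)%N) Y (pi k i) | <= lam.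

Lemma liso_loss_zero_fit_addl_le th : inF X th ->
  liso_loss lam Y (@zero_fit R n p)
    + 2^-1 * \sum_(i < n) (\sum_(k < p) th k i) ^+ 2 <= liso_loss lam Y th.
Proof.
move=> hth; rewrite [leRHS]liso_lossE lerDl subr_ge0 mulr_sumr.
by apply: ler_sum => k _; apply: inner_inFk_le_range (hpi k) (hlam k) (hth k).
Qed.

Lemma zero_fit_minimizer th : inF X th ->
  liso_loss lam Y (@zero_fit R n p) <= liso_loss lam Y th.
Proof.
move=> /liso_loss_zero_fit_addl_le; apply: le_trans.
by rewrite lerDl mulr_ge0 ?invr_ge0 ?ler0n ?sumr_ge0 // => i _; apply: sqr_ge0.
Qed.

Lemma minimizer_total_fit_eq0 th : inF X th ->
  liso_loss lam Y th <= liso_loss lam Y (@zero_fit R n p) ->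
  forall i, \sum_(k < p) th k i = 0.
Proof.
move=> /liso_loss_zero_fit_addl_le h1 /(le_trans h1).
rewrite -[leRHS]addr0 lerD2l pmulr_rle0 ?invr_gt0 ?ltr0n // => hS i.
have /psumr_eq0P : \sum_(i < n) (\sum_(k < p) th k i) ^+ 2 = 0.
  by apply: le_anti; rewrite hS sumr_ge0 // => j _; apply: sqr_ge0.
by move=> /(_ (fun _ _ => sqr_ge0 _) i isT) /eqP; rewrite sqrf_eq0 => /eqP.
Qed.

End LisoZero.

Theorem mainTheorem8 (R : realFieldType) (n p : nat)
  (Y : 'I_n -> R) (X : 'I_p -> 'I_n -> R) (lam : R)
  (pi : 'I_p -> 'S_n)
  (hY : \sum_(i < n) Y i = 0)
  (hX : forall k : 'I_p, injective (X k))
  (hpi : forall (k : 'I_p) (i j : 'I_n), (i < j)%N -> X k (pi k i) < X k (pi k j))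
  (hlam : forall (k : 'I_p) (m : nat), (1 <= m <= n)%N ->
            `| \sum_(i < n | (i < m)%N) Y (pi k i) | <= lam) :
  (forall th : 'I_p -> 'I_n -> R, inF X th ->
     liso_loss lam Y (@zero_fit R n p) <= liso_loss lam Y th)
  /\
  (forall k : 'I_p,
     (forall t : 'I_n -> R, inFk (X k) t ->
        liso_loss lam Y (upd (@zero_fit R n p) k (fun _ => 0))
          <= liso_loss lam Y (upd (@zero_fit R n p) k t))
     /\
     (forall t : 'I_n -> R, inFk (X k) t ->
        (forall t' : 'I_n -> R, inFk (X k) t' ->
           liso_loss lam Y (upd (@zero_fit R n p) k t)
             <= liso_loss lam Y (upd (@zero_fit R n p) k t')) ->
        t = (fun _ => 0))).
Proof.
have minimizer := zero_fit_minimizer hY hpi hlam.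
split=> // k; rewrite upd_zero_fit0; split=> [t ht|t ht tmin].
  exact/minimizer/inF_upd_zero_fit.
have := tmin _ (inFk0 (X k)); rewrite upd_zero_fit0.
move=> /(minimizer_total_fit_eq0 hY hpi hlam (inF_upd_zero_fit ht)) total0.
by apply: functional_extensionality => i; rewrite -(sum_upd_zero_fit k t i).
Qed.
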